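(* Let $\mathbb{K}$ be a field of characteristic not $2$ or $3$ and let $\mathbb{A}$ be a commutative algebra over $\mathbb{K}$. Then $\mathbb{A}$ satisfies $(xy)^2=x^2y^2$ for all $x,y\in\mathbb{A}$ if and only if it satisfies $(xy)(zw)=(xz)(yw)$ for all $x,y,z,w\in\mathbb{A}$.
   Context: The algebra is possibly nonassociative; $x^2=xx$. *)

From mathcomp Require Import all_boot all_order all_algebra.
Set Implicit Arguments. Unset Strict Implicit. Unset Printing Implicit Defensive.
Import GRing.Theory.
Local Open Scope ring_scope.

Definition bilinear_mul (K : fieldType) (A : lmodType K) (mul : A -> A -> A) : Prop :=
  (forall (a : K) (x y z : A), mul (a *: x + y) z = a *: mul x z + mul y z) /\
  (forall (a : K) (x y z : A), mul x (a *: y + z) = a *: mul x y + mul x z).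

Definition commutative_mul (A : Type) (mul : A -> A -> A) : Prop :=
  forall x y : A, mul x y = mul y x.

From mathcomp Require Import all_boot all_order all_algebra.
Local Open Scope ring_scope.
Import GRing.Theory.

(* Linearize (xy)^2 = x^2 y^2 first in x, then in y; dividing by 2 this gives
   (xy)(zw) + (xw)(zy) = 2 (xz)(yw).  Adding the same identity with y and z
   exchanged and using commutativity leaves 3 (xy)(zw) = 3 (xz)(yw). *)

Lemma mulrn_inj {K : fieldType} {A : lmodType K} {n : nat} :
  (n%:R : K) != 0 -> injective (fun u : A => u *+ n).
Proof. by move=> nK0 u v /= uv; apply: (scalerI nK0); rewrite !scaler_nat. Qed.

Section CommutativeAlgebra.

Variables (K : fieldType) (A : lmodType K) (mul : A -> A -> A).
Hypotheses (hbil : bilinear_mul mul) (hcomm : commutative_mul mul).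

Local Notation "x ⋅ y" := (mul x y) (at level 40, left associativity).

Lemma mulDl x y z : (x + y) ⋅ z = x ⋅ z + y ⋅ z.
Proof. by rewrite -[x]scale1r hbil.1 !scale1r. Qed.

Lemma mulDr x y z : z ⋅ (x + y) = z ⋅ x + z ⋅ y.
Proof. by rewrite -[x]scale1r hbil.2 !scale1r. Qed.

Section SquareLaw.

Hypotheses (hchar2 : (2%:R : K) != 0)
  (sqr_mul : forall x y, (x ⋅ y) ⋅ (x ⋅ y) = (x ⋅ x) ⋅ (y ⋅ y)).

Lemma sqr_mul_linear1 x z y : (x ⋅ y) ⋅ (z ⋅ y) = (x ⋅ z) ⋅ (y ⋅ y).
Proof.
apply: (mulrn_inj hchar2); rewrite /= !mulr2n.
have := sqr_mul (x + z) y.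
rewrite !(mulDl, mulDr) !sqr_mul [(z ⋅ y) ⋅ (x ⋅ y)]hcomm [z ⋅ x]hcomm.
by rewrite -!addrA => /addrI; rewrite !addrA => /addIr.
Qed.

Lemma sqr_mul_linear2 x y z w :
  (x ⋅ y) ⋅ (z ⋅ w) + (x ⋅ w) ⋅ (z ⋅ y) = ((x ⋅ z) ⋅ (y ⋅ w)) *+ 2.
Proof.
have := sqr_mul_linear1 x z (y + w).
rewrite !(mulDl, mulDr) !sqr_mul_linear1 [w ⋅ y]hcomm mulr2n.
by rewrite -!addrA => /addrI; rewrite !addrA => /addIr.
Qed.

Hypothesis hchar3 : (3%:R : K) != 0.

Lemma sqr_mul_medial x y z w : (x ⋅ y) ⋅ (z ⋅ w) = (x ⋅ z) ⋅ (y ⋅ w).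
Proof.
have yzw := sqr_mul_linear2 x y z w.
have zyw := sqr_mul_linear2 x z y w.
rewrite [z ⋅ y]hcomm in yzw.
by apply: (mulrn_inj hchar3); rewrite /= !(mulrS _ 2) -zyw -yzw addrCA.
Qed.

End SquareLaw.

End CommutativeAlgebra.

Theorem proposition3p1 (K : fieldType) (A : lmodType K) (mul : A -> A -> A)
  (hchar2 : (2%:R : K) != 0) (hchar3 : (3%:R : K) != 0)
  (hbil : bilinear_mul mul) (hcomm : commutative_mul mul) :
  (forall x y : A, mul (mul x y) (mul x y) = mul (mul x x) (mul y y)) <->
  (forall x y z w : A, mul (mul x y) (mul z w) = mul (mul x z) (mul y w)).
Proof.
split=> [sqr_mul | medial x y]; last exact: medial.
exact: sqr_mul_medial.
Qed.
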